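(* Let $\imath:V\hookrightarrow U$ be an inclusion of regular molecules such that $n:=\dim U=\dim V$ and $V$ is round. If $\imath$ is a submolecule inclusion, then $\mathcal F_{n-1}V$ (identified with the induced subgraph of $\mathcal F_{n-1}U$ on the image of $\imath$) is a path-induced subgraph of $\mathcal F_{n-1}U$.
   Context: All posets are finite; $y$ covers $x$ if $x<y$ with nothing strictly between. A finite poset is graded if for each $x$ all maximal covering chains descending from $x$ have the same length $\dim x$; $U_n$ denotes elements of dimension $n$. An oriented graded poset is a finite graded poset with a label $\pm$ on each covering pair; $\Delta^\alpha x$ ($\nabla^\alpha x$) is the set of elements covered by (covering) $x$ with label $\alpha$. For closed (downward closed) $U$, with $\mathrm{cl}$ downward closure, $\max U$ maximal elements, $\dim U$ maximal dimension: $\Delta^\alpha_nU=\{x\in U_n:\nabla^{-\alpha}x\cap U=\emptyset\}$, $\partial^\alpha_nU=\mathrm{cl}(\Delta^\alpha_nU)\cup\bigcup_{k<n}\mathrm{cl}((\max U)_k)$ ($\emptyset$ for $n<0$), $\partial_nU=\partial^-_nU\cup\partial^+_nU$, subscript omitted for $n=\dim U-1$; $\Delta^\alpha_kx:=\Delta^\alpha_k\mathrm{cl}\{x\}$. Maps are functions with $f(\partial^\alpha_n\mathrm{cl}\{x\})=\partial^\alpha_n\mathrm{cl}\{f(x)\}$; inclusions are injective maps. $U\#_kV$ is the pushout of $U\hookleftarrow\partial^+_kU\cong\partial^-_kV\hookrightarrow V$; for $U,V$ of equal dimension $n$ with $\partial U\cong\partial V$ compatibly with $\partial^\pm$, $U\Rightarrow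 V$ is that pushout with a new element $\top$ of dimension $n+1$, $\Delta^-\top=U_n$, $\Delta^+\top=V_n$. $U$ is round if $\partial^-_nU\cap\partial^+_nU=\partial_{n-1}U$ for all $n<\dim U$. Regular molecules: smallest isomorphism-closed class containing the point, closed under $U\#_kV$ ($k<\min(\dim U,\dim V)$) and $U\Rightarrow V$ for round regular molecules of equal dimension. Submolecule inclusions: smallest class of inclusions of regular molecules containing isomorphisms and $U\hookrightarrow U\#_kV\hookleftarrow V$, closed under composition. $\mathcal F_kU$: directed graph with vertices $\bigcup_{i>k}U_i$ and edge $x\to y$ iff $\Delta^+_kx\cap\Delta^-_ky\ne\emptyset$. For a directed graph $\mathcal G$ and vertex subset $W$, the induced subgraph on $W$ is path-induced if for all $x,y\in W$ every path from $x$ to $y$ in $\mathcal G$ lies in the induced subgraph. *)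

From HB Require Import structures.
From mathcomp Require Import all_boot all_order all_algebra.
Set Implicit Arguments. Unset Strict Implicit. Unset Printing Implicit Defensive.

Definition covers (T : finType) (le : rel T) (y x : T) : bool :=
  [&& le x y, x != y &
      [forall z, (le x z && le z y) ==> ((z == x) || (z == y))]].

Definition max_down_chain (T : finType) (le : rel T) (x : T) (s : seq T) : bool :=
  path (covers le) x s && [forall z, ~~ covers le (last x s) z].

Definition graded (T : finType) (le : rel T) : Prop :=
  forall x s t, max_down_chain le x s -> max_down_chain le x t -> size s = size t.

(** An oriented graded poset: finite poset, graded, with a label on each
    covering pair.  [olab x y] is the label of the covering pair x < y
    (true = +, false = -); its value on non-covering pairs is irrelevant. *)
Record ogpos := OGPos {
  ocar :> finType;
  ole : rel ocar;
  ole_refl : reflexive ole;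
  ole_anti : antisymmetric ole;
  ole_trans : transitive ole;
  ograded : graded ole;
  olab : ocar -> ocar -> bool
}.

Section OG.
Variable P : ogpos.

(** dim x: length of a (greedily chosen) maximal descending covering chain;
    by gradedness all such chains have this length.  Fuel #|P| suffices. *)
Fixpoint dimf (fuel : nat) (x : P) : nat :=
  match fuel with
  | 0 => 0
  | f.+1 => match [pick y | covers (@ole P) x y] with
            | Some y => (dimf f y).+1
            | None => 0
            end
  end.
Definition odim (x : P) : nat := dimf #|P| x.

Definition cl (A : {set P}) : {set P} := [set x | [exists y in A, ole x y]].
Definition maxel (A : {set P}) : {set P} :=
  [set x in A | [forall y in A, ole x y ==> (y == x)]].
(** dimension of a set (used only for nonempty sets) *)
Definition dimS (A : {set P}) : nat := \max_(x in A) odim x.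

(** Delta^a_n A = { x in A_n | nabla^{-a} x cap A = emptyset } *)
Definition Delta (a : bool) (n : nat) (A : {set P}) : {set P} :=
  [set x in A | (odim x == n) &&
     [forall y in A, ~~ (covers (@ole P) y x && (olab x y == ~~ a))]].

Definition bd (a : bool) (n : nat) (A : {set P}) : {set P} :=
  cl (Delta a n A) :|: cl [set x in maxel A | odim x < n].
Definition bdd (n : nat) (A : {set P}) : {set P} := bd false n A :|: bd true n A.

Definition bdm1 (a : bool) (n : nat) (A : {set P}) : {set P} :=
  if n is m.+1 then bd a m A else set0.
Definition bddm1 (n : nat) (A : {set P}) : {set P} :=
  if n is m.+1 then bdd m A else set0.

Definition round (A : {set P}) : Prop :=
  forall n, n < dimS A -> bd false n A :&: bd true n A = bddm1 n A.

Definition DeltaZ (a : bool) (k : int) (A : {set P}) : {set P} :=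
  match k with Posz m => Delta a m A | Negz _ => set0 end.

Definition flow_vertex (k : int) (x : P) : bool := (k < (odim x)%:Z)%R.
Definition flow_edge (k : int) : rel P := fun x y =>
  [&& flow_vertex k x, flow_vertex k y &
      DeltaZ true k (cl [set x]) :&: DeltaZ false k (cl [set y]) != set0].

Definition path_induced (e : rel P) (W : {set P}) : Prop :=
  forall x y, x \in W -> y \in W ->
  forall s, path e x s -> last x s = y -> all (fun z => z \in W) s.

End OG.

Definition is_map (P Q : ogpos) (f : P -> Q) : Prop :=
  forall (x : P) (a : bool) (n : nat),
    f @: bd a n (cl [set x]) = bd a n (cl [set f x]).
Definition inclusion (P Q : ogpos) (f : P -> Q) : Prop := is_map f /\ injective f.
Definition is_iso (P Q : ogpos) (f : P -> Q) : Prop := inclusion f /\ bijective f.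

(** W (with inclusions iU, iV) is the pasting U #_k V: the pushout of
    U <- partial^+_k U ~= partial^-_k V -> V. *)
Definition is_paste (k : nat) (U V W : ogpos) (iU : U -> W) (iV : V -> W) : Prop :=
  [/\ inclusion iU, inclusion iV,
      (iU @: [set: U]) :|: (iV @: [set: V]) = [set: W],
      (iU @: [set: U]) :&: (iV @: [set: V]) = iU @: bd true k [set: U] &
      iU @: bd true k [set: U] = iV @: bd false k [set: V]].

Definition is_rewrite (U V W : ogpos) (iU : U -> W) (iV : V -> W) (top : W) : Prop :=
  let n := dimS [set: U] in
  [/\ dimS [set: V] = n, inclusion iU, inclusion iV &
      (iU @: [set: U]) :|: (iV @: [set: V]) = [set~ top]] /\
  [/\ (iU @: [set: U]) :&: (iV @: [set: V]) = iU @: bddm1 n [set: U],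
      (forall a, iU @: bdm1 a n [set: U] = iV @: bdm1 a n [set: V]),
      (forall w, covers (@ole W) top w <->
                 w \in (iU @: [set u | odim u == n]) :|: (iV @: [set v | odim v == n])) &
      (forall w, covers (@ole W) top w ->
                 olab w top = (w \in iV @: [set v | odim v == n]))].

Inductive regmol : ogpos -> Prop :=
| rm_point (P : ogpos) : #|P| = 1 -> regmol P
| rm_iso (U W : ogpos) (f : U -> W) : regmol U -> is_iso f -> regmol W
| rm_paste (k : nat) (U V W : ogpos) (iU : U -> W) (iV : V -> W) :
    regmol U -> regmol V -> k < minn (dimS [set: U]) (dimS [set: V]) ->
    is_paste k iU iV -> regmol W
| rm_rewrite (U V W : ogpos) (iU : U -> W) (iV : V -> W) (top : W) :
    regmol U -> regmol V -> round [set: U] -> round [set: V] ->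
    is_rewrite iU iV top -> regmol W.

Inductive submol : forall (V U : ogpos), (V -> U) -> Prop :=
| sm_iso (V U : ogpos) (f : V -> U) : regmol V -> regmol U -> is_iso f -> submol f
| sm_left (k : nat) (U V W : ogpos) (iU : U -> W) (iV : V -> W) :
    regmol U -> regmol V -> regmol W -> is_paste k iU iV -> submol iU
| sm_right (k : nat) (U V W : ogpos) (iU : U -> W) (iV : V -> W) :
    regmol U -> regmol V -> regmol W -> is_paste k iU iV -> submol iV
| sm_comp (A B C : ogpos) (f : A -> B) (g : B -> C) :
    submol f -> submol g -> submol (fun x => g (f x)).

From Pilot Require Import Defs.
From mathcomp Require Import all_boot all_order all_algebra.
Set Implicit Arguments. Unset Strict Implicit. Unset Printing Implicit Defensive.
Import GRing.Theory.

(* Submolecule inclusions are generated by isomorphisms and the two inclusions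
   of U and V into U #_j V.  In F_m (U #_j V) with j <= m no edge leads from the
   V-part into the U-part: a common face of its endpoints would be an
   m-dimensional output face of an element of V lying in ∂^+_j U = ∂^-_j V;
   for j < m this contradicts dimensions, and for j = m it contradicts the fact
   that the m-dimensional elements of ∂^-_m V are input faces of everything
   above them.  So the U-part is closed under
   predecessors and the V-part under successors, and a path between two
   vertices of one part stays in it.  For j > m the inclusion is surjective,
   and path-inducedness is stable under composition of inclusions. *)

Section Dimension.
Variable P : ogpos.
Local Notation le := (@ole P).
Local Notation covers := (covers le).

Fixpoint greedy_chain (fuel : nat) (x : P) : seq P :=
  match fuel with
  | 0 => [::]
  | f.+1 => match [pick y | covers x y] with
            | Some y => y :: greedy_chain f y
            | None => [::]
            end
  end.

Lemma size_greedy_chain f x : size (greedy_chain f x) = dimf f x.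
Proof.
elim: f x => [//|f IH] x /=.
by case: pickP => [y _|_] //=; rewrite IH.
Qed.

Lemma greedy_chain_path f x : path covers x (greedy_chain f x).
Proof.
elim: f x => [//|f IH] x /=.
by case: pickP => [y cov_xy|_] //=; rewrite cov_xy IH.
Qed.

Lemma greedy_chain_stops f x :
  size (greedy_chain f x) = f \/ forall z, ~~ covers (last x (greedy_chain f x)) z.
Proof.
elim: f x => [|f IH] x /=; first by left.
case: pickP => [y _|nocov] /=; last by right=> z; rewrite nocov.
by case: (IH y) => [->|]; [left | right].
Qed.

Lemma odim_le_card (x : P) : odim x <= #|P|.
Proof.
rewrite /odim; elim: #|P| x => [|f IH] x //=.
by case: pickP => [y _|_] //; rewrite ltnS IH.
Qed.

Definition ogt : rel P := fun x y => le y x && (x != y).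

Lemma covers_ogt x y : covers x y -> ogt x y.
Proof. by case/and3P => le_yx ne_yx _; rewrite /ogt le_yx eq_sym ne_yx. Qed.

Lemma ogt_trans : transitive ogt.
Proof.
move=> y x z /andP [le_yx ne_xy] /andP [le_zy ne_yz].
rewrite /ogt (ole_trans le_zy le_yx) /=; apply: contraNneq ne_xy => eq_xz.
by apply/eqP/ole_anti; rewrite le_yx eq_xz le_zy.
Qed.

Lemma ogt_irr : irreflexive ogt.
Proof. by move=> x; rewrite /ogt eqxx andbF. Qed.

(* A covering chain has no repetitions, so fuel [#|P|] never runs out. *)
Lemma greedy_chain_max x : max_down_chain le x (greedy_chain #|P| x).
Proof.
rewrite /max_down_chain greedy_chain_path /=.
case: (greedy_chain_stops #|P| x) => [full|stuck]; last exact/forallP.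
have sorted_chain : sorted ogt (x :: greedy_chain #|P| x).
  exact: (sub_path covers_ogt (greedy_chain_path _ _)).
have /card_uniqP card_chain := sorted_uniq ogt_trans ogt_irr sorted_chain.
by have := max_card (mem (x :: greedy_chain #|P| x)); rewrite card_chain /= full ltnn.
Qed.

Lemma size_max_down_chain x s : max_down_chain le x s -> size s = odim x.
Proof.
by move=> max_s; rewrite /odim -size_greedy_chain (ograded max_s (greedy_chain_max x)).
Qed.

Lemma covers_odim y x : covers y x -> odim y = (odim x).+1.
Proof.
move=> cov_yx; have /andP [path_x stop_x] := greedy_chain_max x.
have max_y : max_down_chain le y (x :: greedy_chain #|P| x).
  by rewrite /max_down_chain /= cov_yx path_x.
by rewrite -(size_max_down_chain max_y) /= size_greedy_chain.
Qed.

Definition itv (x y : P) : {set P} := [set z | le x z && le z y].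

Lemma card_itv_shrink x y x' y' : le x x' -> le x' y' -> le y' y ->
  (x' != x) || (y' != y) -> #|itv x' y'| < #|itv x y|.
Proof.
move=> le_xx' le_x'y' le_y'y ne; apply: proper_card; apply/properP; split.
  apply/subsetP => z; rewrite !inE => /andP [le_x'z le_zy'].
  by rewrite (ole_trans le_xx' le_x'z) (ole_trans le_zy' le_y'y).
case/orP: ne => [ne_x|ne_y].
  exists x; first by rewrite inE ole_refl (ole_trans le_xx' (ole_trans le_x'y' le_y'y)).
  by rewrite inE; apply: contraNN ne_x => /andP [le_x'x _]; apply/eqP/ole_anti/andP.
exists y; first by rewrite inE ole_refl (ole_trans le_xx' (ole_trans le_x'y' le_y'y)).
by rewrite inE; apply: contraNN ne_y => /andP [_ le_yy']; apply/eqP/ole_anti/andP.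
Qed.

Lemma exists_cover_below x y : le x y -> x != y -> exists2 w, covers w x & le w y.
Proof.
have [c] := ubnP #|itv x y|; elim: c => // c IH in x y *.
rewrite ltnS => card_xy le_xy ne_xy.
case cov_yx: (covers y x); first by exists y; rewrite ?ole_refl.
move: cov_yx; rewrite /Defs.covers le_xy ne_xy /= => /forallPn [z].
rewrite negb_imply negb_or => /and3P [/andP [le_xz le_zy] ne_zx ne_zy].
have card_xz : #|itv x z| < c.
  by apply: leq_trans card_xy; apply: card_itv_shrink; rewrite ?ole_refl ?ne_zy ?orbT.
have ne_xz : x != z by rewrite eq_sym.
have [w cov_wx le_wz] := IH x z card_xz le_xz ne_xz.
by exists w; last exact: ole_trans le_wz le_zy.
Qed.

Lemma odim_lt x y : le x y -> x != y -> odim x < odim y.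
Proof.
have [c] := ubnP #|itv x y|; elim: c => // c IH in x y *.
rewrite ltnS => card_xy le_xy ne_xy.
have [w cov_wx le_wy] := exists_cover_below le_xy ne_xy.
rewrite -ltnS -(covers_odim cov_wx) ltnS.
have [-> //|ne_wy] := eqVneq w y.
have /and3P [le_xw ne_xw _] := cov_wx.
apply/ltnW/IH => //; apply: leq_trans card_xy.
by apply: card_itv_shrink; rewrite ?ole_refl ?(eq_sym w) ?ne_xw.
Qed.

Lemma odim_le x y : le x y -> odim x <= odim y.
Proof. by move=> le_xy; have [-> //|/(odim_lt le_xy)/ltnW] := eqVneq x y. Qed.

Lemma odim_le_inj x y : le x y -> odim x = odim y -> x = y.
Proof.
move=> le_xy eq_d; have [//|ne_xy] := eqVneq x y.
by move: (odim_lt le_xy ne_xy); rewrite eq_d ltnn.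
Qed.

End Dimension.

Section Boundary.
Variable P : ogpos.
Local Notation le := (@ole P).

Lemma clP (A : {set P}) z : reflect (exists2 y, y \in A & le z y) (z \in cl A).
Proof.
rewrite inE; apply: (iffP existsP) => [[y /andP []]|[y A_y le_zy]].
  by exists y.
by exists y; rewrite A_y.
Qed.

Lemma in_cl1 (z x : P) : (z \in cl [set x]) = le z x.
Proof. by apply/clP/idP => [[y /set1P -> //]|le_zx]; exists x; rewrite ?set11. Qed.

Lemma Delta_bd a m (A : {set P}) : Delta a m A = [set z in bd a m A | odim z == m].
Proof.
apply/setP => z; rewrite inE; apply/idP/andP => [Delta_z|[]].
  split; last by move: Delta_z; rewrite inE => /and3P [].
  by rewrite inE; apply/orP; left; apply/clP; exists z; rewrite ?ole_refl.
rewrite inE => /orP [] /clP [y]; last first.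
  rewrite inE => /andP [_ lt_y] /odim_le le_zy /eqP dim_z.
  by move: (leq_ltn_trans le_zy lt_y); rewrite dim_z ltnn.
move=> Delta_y le_zy /eqP dim_z.
have dim_y : odim y = m by move: Delta_y; rewrite inE => /and3P [_ /eqP].
by rewrite (odim_le_inj le_zy) ?dim_z.
Qed.

Lemma bd_odim a j (A : {set P}) z : z \in bd a j A -> odim z <= j.
Proof.
rewrite inE => /orP [] /clP [y]; rewrite inE.
  by case/and3P => _ /eqP <- _ /odim_le.
by case/andP => _ lt_y /odim_le le_zy; apply/ltnW/(leq_ltn_trans le_zy).
Qed.

Lemma bd_cl1_big a N (x : P) : #|P| < N -> bd a N (cl [set x]) = cl [set x].
Proof.
move=> big_N; apply/setP => z; apply/idP/idP => [|cl_z].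
  rewrite inE => /orP [] /clP [y].
    rewrite inE => /and3P [_ /eqP dim_y _].
    by move: (odim_le_card y); rewrite dim_y leqNgt big_N.
  rewrite inE => /andP []; rewrite inE in_cl1 => /andP [le_yx _] _ le_zy.
  by rewrite in_cl1 (ole_trans le_zy le_yx).
rewrite inE; apply/orP; right; apply/clP; exists x; last by rewrite -in_cl1.
rewrite inE (leq_ltn_trans (odim_le_card x) big_N) andbT inE in_cl1 ole_refl /=.
apply/forall_inP => y; rewrite in_cl1 => le_yx.
by apply/implyP => le_xy; apply/eqP/ole_anti/andP.
Qed.

Lemma exists_maximal_above (v : P) : exists2 t, le v t & forall u, le t u -> u = t.
Proof.
have [t le_vt max_t] := @arg_maxnP _ v (le v) (@odim P) (ole_refl v).
exists t => // u le_tu; apply/esym/(odim_le_inj le_tu)/eqP.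
by rewrite eqn_leq odim_le //=; apply: max_t; apply: ole_trans le_vt le_tu.
Qed.

Lemma bd_setT a j : (forall x : P, odim x <= j) -> bd a j [set: P] = [set: P].
Proof.
move=> dim_le_j; apply/setP => v; rewrite in_setT; apply/setUP.
have [t le_vt max_t] := exists_maximal_above v.
have := dim_le_j t; rewrite leq_eqVlt => /orP [/eqP dim_t|lt_t].
  left; apply/clP; exists t; rewrite // !inE dim_t eqxx /=.
  apply/forall_inP => u _; apply/negP => /andP [/and3P [le_tu ne_tu _] _].
  by rewrite (max_t u) ?eqxx in ne_tu.
right; apply/clP; exists t; rewrite // !inE lt_t andbT.
by apply/forall_inP => u _; apply/implyP => /max_t ->.
Qed.

Lemma Delta_plus_notin_bd_minus m (v w : P) :
  m < odim v -> w \in Delta true m (cl [set v]) -> w \notin bd false m [set: P].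
Proof.
move=> lt_m; rewrite inE in_cl1 => /and3P [le_wv /eqP dim_w out_w].
have ne_wv : w != v by apply: contraTneq lt_m => eq_wv; rewrite -dim_w eq_wv ltnn.
have [u cov_uw le_uv] := exists_cover_below le_wv ne_wv.
have lab_u : olab w u.
  by move/forall_inP/(_ u): out_w; rewrite in_cl1 le_uv cov_uw => /(_ isT); case: olab.
apply/negP => bd_w.
have : w \in Delta false m [set: P] by rewrite Delta_bd inE bd_w dim_w eqxx.
by rewrite inE => /and3P [_ _ /forall_inP/(_ u (in_setT u))]; rewrite cov_uw lab_u.
Qed.

End Boundary.

Section Inclusion.
Variables (P Q : ogpos) (f : P -> Q).
Hypothesis incl_f : inclusion f.

Let f_inj : injective f. Proof. by case: incl_f. Qed.

Lemma incl_cl (x : P) : f @: cl [set x] = cl [set f x].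
Proof.
case: incl_f => map_f _.
have [N big_P big_Q] : exists2 N, #|P| < N & #|Q| < N.
  by exists (#|P| + #|Q|).+1; rewrite ltnS ?leq_addr ?leq_addl.
by rewrite -(bd_cl1_big true x big_P) -(bd_cl1_big true (f x) big_Q) map_f.
Qed.

Lemma incl_below (w : Q) (x : P) : ole w (f x) -> exists2 u, w = f u & ole u x.
Proof. by rewrite -in_cl1 -incl_cl => /imsetP [u cl_u ->]; exists u; rewrite -?in_cl1. Qed.

Lemma incl_le (x y : P) : ole (f x) (f y) = ole x y.
Proof.
apply/idP/idP => [/incl_below [u /f_inj -> //]|le_xy].
by rewrite -in_cl1 -incl_cl imset_f ?in_cl1.
Qed.

Lemma incl_covers (y x : P) : covers (@ole Q) (f y) (f x) = covers (@ole P) y x.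
Proof.
rewrite /covers incl_le (inj_eq f_inj); case: (ole x y) (x != y) => [] [] //=.
apply/forallP/forallP => between z.
  by have := between (f z); rewrite !incl_le !(inj_eq f_inj).
apply/implyP => /andP [le_xz le_zy]; have [u eq_z le_uy] := incl_below le_zy.
by move: le_xz (between u); rewrite eq_z !incl_le le_uy !(inj_eq f_inj) andbT => ->.
Qed.

Lemma incl_max_down_chain (x : P) s :
  max_down_chain (@ole P) x s -> max_down_chain (@ole Q) (f x) (map f s).
Proof.
case/andP => path_s /forallP stop_s; apply/andP; split.
  by rewrite path_map (eq_path incl_covers).
rewrite last_map; apply/forallP => w; apply/negP => cov_w.
have [u eq_w _] := incl_below (proj1 (andP cov_w)).
by move: cov_w; rewrite eq_w incl_covers (negbTE (stop_s u)).
Qed.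

Lemma incl_odim (x : P) : odim (f x) = odim x.
Proof.
have /size_max_down_chain <- := incl_max_down_chain (greedy_chain_max x).
by rewrite size_map size_greedy_chain.
Qed.

(* Maps preserve boundaries but not labels; [Delta_bd] recovers Delta from boundaries. *)
Lemma incl_Delta a m (y : P) : f @: Delta a m (cl [set y]) = Delta a m (cl [set f y]).
Proof.
case: incl_f => map_f _; rewrite !Delta_bd -map_f.
apply/setP => z; rewrite inE; apply/imsetP/andP => [[u]|[/imsetP [u bd_u ->] dim_u]].
  by rewrite inE => /andP [bd_u dim_u] ->; rewrite imset_f // incl_odim.
by exists u; rewrite // inE bd_u -incl_odim.
Qed.

Lemma incl_flow_vertex k (x : P) : flow_vertex k (f x) = flow_vertex k x.
Proof. by rewrite /flow_vertex incl_odim. Qed.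

Lemma incl_flow_edge k (x y : P) : flow_edge k (f x) (f y) = flow_edge k x y.
Proof.
rewrite /flow_edge !incl_flow_vertex; case: k => [m|m] /=; last by rewrite !setI0 !eqxx.
by rewrite -!incl_Delta -imsetI ?imset_eq0 // => u v _ _; apply: f_inj.
Qed.

Lemma incl_image_down (w : Q) (x : P) : ole w (f x) -> w \in f @: [set: P].
Proof. by case/incl_below => u -> _; apply: imset_f. Qed.

Lemma dimS_incl : dimS [set: P] <= dimS [set: Q].
Proof.
apply/bigmax_leqP => x _; rewrite -incl_odim.
exact: (leq_bigmax_cond (P := fun y => y \in [set: Q])).
Qed.

End Inclusion.

Lemma inclusion_comp (A B C : ogpos) (f : A -> B) (g : B -> C) :
  inclusion f -> inclusion g -> inclusion (g \o f).
Proof.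
move=> [map_f f_inj] [map_g g_inj]; split=> [x a n|]; last exact: inj_comp.
by rewrite imset_comp map_f map_g.
Qed.

Lemma submol_inclusion (V U : ogpos) (i : V -> U) : submol i -> inclusion i.
Proof.
elim=> {V U i} [V U f _ _ [] //|k U V W iU iV _ _ _ []|k U V W iU iV _ _ _ []|] //.
by move=> A B C f g _ incl_f _ incl_g; apply: inclusion_comp.
Qed.

Lemma path_fwd_closed (T : Type) (e : rel T) (S : pred T) x s :
  (forall a b, S a -> e a b -> S b) -> S x -> path e x s -> all S s.
Proof.
move=> closed_S; elim: s x => //= y s IH x S_x /andP [e_xy path_y].
by have S_y := closed_S _ _ S_x e_xy; rewrite S_y (IH y).
Qed.

Lemma path_bwd_closed (T : Type) (e : rel T) (S : pred T) x s :
  (forall a b, e a b -> S b -> S a) -> path e x s -> S (last x s) -> all S (x :: s).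
Proof.
move=> closed_S; elim: s x => /= [x _ -> //|y s IH x /andP [e_xy path_y] S_last].
by have /= /andP [S_y ->] := IH y path_y S_last; rewrite S_y (closed_S _ _ e_xy S_y).
Qed.

Lemma all_in_imset_map (T1 T2 : finType) (g : T1 -> T2) (D : {set T1}) s :
  all [in g @: D] s -> exists2 s', s = map g s' & all [in D] s'.
Proof.
elim: s => [|z s IH] /=; first by exists [::].
case/andP => /imsetP [u D_u ->] /IH [s' -> D_s']; exists (u :: s') => //=.
by rewrite D_u.
Qed.

Lemma path_flow_vertex (P : ogpos) k (x : P) s :
  path (flow_edge k) x s -> all (flow_vertex k) s.
Proof. by elim: s x => //= y s IH x /andP [/and3P [_ -> _] /IH]. Qed.

Section FlowGraph.
Variables (P Q : ogpos) (i : P -> Q) (k : int).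
Hypothesis incl_i : inclusion i.

Local Notation vertices := [set v | flow_vertex k v].

Lemma all_in_image_vertices (x : Q) s : path (flow_edge k) x s ->
  all [in i @: [set: P]] s -> all [in i @: vertices] s.
Proof.
move=> /path_flow_vertex /allP vert_s /allP img_s; apply/allP => z z_s.
have /imsetP [v _ eq_z] := img_s z z_s.
by rewrite eq_z imset_f // inE -(incl_flow_vertex incl_i) -eq_z vert_s.
Qed.

Lemma path_induced_surj :
  i @: [set: P] = [set: Q] -> path_induced (flow_edge k) (i @: vertices).
Proof.
move=> surj_i x y _ _ s path_s _; apply: all_in_image_vertices path_s _.
by apply/allP => z _; rewrite surj_i.
Qed.

End FlowGraph.

Section Paste.
Variables (j : nat) (U V W : ogpos) (iU : U -> W) (iV : V -> W).
Hypothesis paste_W : is_paste j iU iV.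

Let incl_U : inclusion iU. Proof. by case: paste_W. Qed.
Let incl_V : inclusion iV. Proof. by case: paste_W. Qed.

Lemma paste_cover w : w \in iU @: [set: U] \/ w \in iV @: [set: V].
Proof. by case: paste_W => _ _ cover _ _; apply/setUP; rewrite cover. Qed.

Lemma paste_no_flow_back m (v : V) (u : U) :
  j <= m -> flow_edge (Posz m) (iV v) (iU u) = false.
Proof.
case: paste_W => _ _ _ meet glue le_jm; apply/negbTE/negP => /and3P [vert_v _].
case/set0Pn => z; rewrite inE /= -(incl_Delta incl_V) => /andP [/imsetP [v' out_v' ->]].
rewrite inE in_cl1 => /andP [/(incl_image_down incl_U) img_v' _].
have : iV v' \in iU @: [set: U] :&: iV @: [set: V] by rewrite inE img_v' imset_f.
rewrite meet glue mem_imset; last by case: incl_V.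
have dim_v' : odim v' = m by move: out_v'; rewrite inE => /and3P [_ /eqP].
move: le_jm; rewrite leq_eqVlt => /orP [/eqP eq_jm|lt_jm]; last first.
  by move/bd_odim; rewrite dim_v' leqNgt lt_jm.
rewrite -eq_jm in out_v' vert_v; have lt_jv : j < odim v.
  by move: vert_v; rewrite /flow_vertex ltz_nat (incl_odim incl_V).
exact: (negP (Delta_plus_notin_bd_minus lt_jv out_v')).
Qed.

Lemma paste_imset_U : dimS [set: V] <= j -> iU @: [set: U] = [set: W].
Proof.
case: paste_W => _ _ _ _ glue dim_V; apply/setP => w; rewrite inE.
have [//|/imsetP [v _ ->]] := paste_cover w.
have : iV v \in iV @: bd false j [set: V].
  rewrite bd_setT ?imset_f // => x; apply: leq_trans dim_V.
  exact: (leq_bigmax_cond (P := fun y => y \in [set: V])).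
by rewrite -glue => /imsetP [u _ ->]; apply: imset_f.
Qed.

Lemma paste_imset_V : dimS [set: U] <= j -> iV @: [set: V] = [set: W].
Proof.
case: paste_W => _ _ _ _ glue dim_U; apply/setP => w; rewrite inE.
have [/imsetP [u _ ->]|//] := paste_cover w.
have : iU u \in iU @: bd true j [set: U].
  rewrite bd_setT ?imset_f // => x; apply: leq_trans dim_U.
  exact: (leq_bigmax_cond (P := fun y => y \in [set: U])).
by rewrite glue => /imsetP [v _ ->]; apply: imset_f.
Qed.

Lemma path_induced_paste_l m : dimS [set: W] <= m.+1 ->
  path_induced (flow_edge (Posz m)) (iU @: [set u | flow_vertex (Posz m) u]).
Proof.
move=> dim_W; have [lt_mj|le_jm] := ltnP m j.
  apply: path_induced_surj incl_U _; apply: paste_imset_U.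
  exact: leq_trans (dimS_incl incl_V) (leq_trans dim_W lt_mj).
move=> x y _ /imsetP [u _ ->] s path_s last_s.
apply: (all_in_image_vertices incl_U path_s).
have /andP [] // : all [in iU @: [set: U]] (x :: s).
apply: path_bwd_closed path_s _; last by rewrite last_s imset_f.
move=> a b e_ab /imsetP [u' _ eq_b]; have [//|/imsetP [v _ eq_a]] := paste_cover a.
by move: e_ab; rewrite eq_a eq_b paste_no_flow_back.
Qed.

Lemma path_induced_paste_r m : dimS [set: W] <= m.+1 ->
  path_induced (flow_edge (Posz m)) (iV @: [set v | flow_vertex (Posz m) v]).
Proof.
move=> dim_W; have [lt_mj|le_jm] := ltnP m j.
  apply: path_induced_surj incl_V _; apply: paste_imset_V.
  exact: leq_trans (dimS_incl incl_U) (leq_trans dim_W lt_mj).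
move=> x y /imsetP [v _ ->] _ s path_s _.
apply: (all_in_image_vertices incl_V path_s).
apply: path_fwd_closed path_s; last exact: imset_f.
move=> a b /imsetP [v' _ eq_a] e_ab; have [/imsetP [u _ eq_b]|//] := paste_cover b.
by move: e_ab; rewrite eq_a eq_b paste_no_flow_back.
Qed.

End Paste.

Lemma path_induced_comp (A B C : ogpos) (f : A -> B) (g : B -> C) k :
  inclusion f -> inclusion g ->
  path_induced (flow_edge k) (f @: [set v | flow_vertex k v]) ->
  path_induced (flow_edge k) (g @: [set v | flow_vertex k v]) ->
  path_induced (flow_edge k) ((g \o f) @: [set v | flow_vertex k v]).
Proof.
move=> incl_f incl_g ind_f ind_g _ _ /imsetP [a vert_a ->] /imsetP [b vert_b ->].
move=> s path_s last_s.
have vert_f x : x \in [set v | flow_vertex k v] -> f x \in [set v | flow_vertex k v].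
  by rewrite !inE (incl_flow_vertex incl_f).
have := ind_g _ _ (imset_f g (vert_f a vert_a)) (imset_f g (vert_f b vert_b)) s path_s last_s.
case/all_in_imset_map => s' eq_s _; move: path_s last_s.
rewrite eq_s /comp path_map (eq_path (incl_flow_edge incl_g k)) last_map => path_s'.
have [_ g_inj] := incl_g; move/g_inj => last_s'.
have := ind_f _ _ (imset_f f vert_a) (imset_f f vert_b) s' path_s' last_s'.
rewrite all_map => /allP in_f; apply/allP => _ /in_f /imsetP [x vert_x ->].
by rewrite inE imset_f.
Qed.

Lemma submol_path_induced (V U : ogpos) (i : V -> U) m :
  submol i -> dimS [set: U] <= m.+1 ->
  path_induced (flow_edge (Posz m)) (i @: [set v | flow_vertex (Posz m) v]).
Proof.
move=> sub_i; elim: sub_i m => {V U i}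
  [V U f _ _ [incl_f [g fK gK]]|k U V W iU iV _ _ _ paste_W|k U V W iU iV _ _ _ paste_W
  |A B C f g sub_f IHf sub_g IHg] m dim_U.
- apply: path_induced_surj incl_f _; apply/setP => u.
  by rewrite inE -[u]gK imset_f.
- exact: (path_induced_paste_l paste_W dim_U).
- exact: (path_induced_paste_r paste_W dim_U).
- have [incl_f incl_g] := (submol_inclusion sub_f, submol_inclusion sub_g).
  have dim_B := leq_trans (dimS_incl incl_g) dim_U.
  exact: (path_induced_comp incl_f incl_g (IHf m dim_B) (IHg m dim_U)).
Qed.

Theorem proposition3p22 (U V : ogpos) (i : V -> U) (n : nat) :
  regmol U -> regmol V -> inclusion i ->
  n = dimS [set: U] -> n = dimS [set: V] ->
  round [set: V] ->
  submol i ->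
  path_induced (flow_edge (n%:Z - 1)%R)
               (i @: [set v | flow_vertex (n%:Z - 1)%R v]).
Proof.
move=> _ _ _ dim_U _ _ sub_i; case: n dim_U => [|m] dim_U.
  by move=> x y _ _ [|z s] //= /andP [/and3P [_ _]]; rewrite /= setI0 eqxx.
have -> : (m.+1%:Z - 1)%R = Posz m by rewrite -addn1 PoszD addrK.
by apply: submol_path_induced sub_i _; rewrite -dim_U.
Qed.
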